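(* Let $T_{n,k}=\left[\begin{array}{cc|c}\alpha,&\beta&\gamma\\ \alpha',&\beta'&\gamma'\end{array}\right]_{n,k}$ be a GKP triangle with EGF $G(t,z)$. (i) If $\gamma=0$ and $\gamma'\neq0$, then the left-trimmed triangle $T^*_{n,k}:=(\gamma')^{-1}T_{n+1,k+1}$, $0\le k\le n$, is the GKP triangle $\left[\begin{array}{cc|c}\alpha,&\beta&\alpha+\beta\\ \alpha',&\beta'&\alpha'+\beta'+\gamma'\end{array}\right]_{n,k}$, and its EGF equals $(\gamma')^{-1}\,\frac{1}{t}\,\frac{\partial G}{\partial z}(t,z)$. (ii) If $\gamma'=0$ and $\gamma\neq0$, then the right-trimmed triangle $T^*_{n,k}:=\gamma^{-1}T_{n+1,k}$, $0\le k\le n$, is the GKP triangle $\left[\begin{array}{cc|c}\alpha,&\beta&\alpha+\gamma\\ \alpha',&\beta'&\alpha'\end{array}\right]_{n,k}$, and its EGF equals $\gamma^{-1}\frac{\partial G}{\partial z}(t,z)$.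
   Context: GKP triangle: for complex parameters $\alpha,\beta,\gamma,\alpha',\beta',\gamma'$, the array $T_{n,k}=\left[\begin{array}{cc|c}\alpha,&\beta&\gamma\\ \alpha',&\beta'&\gamma'\end{array}\right]_{n,k}$ ($n,k\in\mathbb Z$) is defined by $T_{0,0}=1$, $T_{n,k}=0$ if $n<0$, $k<0$ or $k>n$, and $T_{n+1,k+1}=[\alpha n+\beta(k+1)+\gamma]\,T_{n,k+1}+[\alpha' n+\beta' k+\gamma']\,T_{n,k}$ for all $n\ge0$ and all integers $k$. Its $n$th row polynomial is $G_n(t)=\sum_{k=0}^n T_{n,k}t^k$ and its (bivariate exponential generating function) EGF is $G(t,z)=\sum_{n\ge0}G_n(t)\,z^n/n!$. *)

From HB Require Import structures.
From mathcomp Require Import all_boot all_order all_algebra.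
Set Implicit Arguments. Unset Strict Implicit. Unset Printing Implicit Defensive.
Import Order.TTheory GRing.Theory Num.Theory.
Local Open Scope ring_scope.

(* Entries with k < 0 are 0 by definition and are not represented; the
   k = -1 instance of the recurrence gives the k = 0 clause below. *)
Fixpoint gkp (C : numClosedFieldType) (a b c a' b' c' : C) (n k : nat) : C :=
  match n with
  | 0 => if k == 0%N then 1 else 0
  | m.+1 =>
    match k with
    | 0 => (a * m%:R + c) * gkp a b c a' b' c' m 0
    | j.+1 => (a * m%:R + b * j.+1%:R + c) * gkp a b c a' b' c' m j.+1
              + (a' * m%:R + b' * j%:R + c') * gkp a b c a' b' c' m j
    end
  end.

Definition rowpoly (C : numClosedFieldType) (T : nat -> nat -> C) (n : nat)
  : {poly C} := \sum_(k < n.+1) T n k *: 'X^k.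

(* A formal power series in z with coefficients in C[t] is represented by
   its sequence of (ordinary) coefficients: F n = coefficient of z^n. *)
Definition egf (C : numClosedFieldType) (T : nat -> nat -> C) : nat -> {poly C} :=
  fun n => (n`!%:R)^-1 *: rowpoly T n.

Definition dz (C : numClosedFieldType) (F : nat -> {poly C}) : nat -> {poly C} :=
  fun n => F n.+1 *+ n.+1.

Definition mulseries (C : numClosedFieldType) (p : {poly C}) (F : nat -> {poly C})
  : nat -> {poly C} := fun n => p * F n.

(* When [c = 0] the column [k = 0] vanishes below the apex, and when [c' = 0]
   the diagonal [k = n] does.  Deleting the first row together with that zero
   column (resp. diagonal) therefore leaves a triangle obeying the GKP
   recurrence, with [n] replaced by [n+1] (and [k] by [k+1] in the left case);
   absorbing these shifts into the constants gives the new parameters.  On the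
   EGF side, deleting the first row is differentiation in [z], and deleting the
   zero column divides the row polynomials by [t]. *)

From HB Require Import structures.
From mathcomp Require Import all_boot all_order all_algebra.
From mathcomp Require Import ring.
Import Order.TTheory GRing.Theory Num.Theory.
Local Open Scope ring_scope.

Section GKPRecurrence.
Variables (C : numClosedFieldType) (a b c a' b' c' : C).
Local Notation T := (gkp a b c a' b' c').

Lemma gkpS0 n : T n.+1 0 = (a * n%:R + c) * T n 0.
Proof. by []. Qed.

Lemma gkpSS n k : T n.+1 k.+1 =
  (a * n%:R + b * k.+1%:R + c) * T n k.+1 + (a' * n%:R + b' * k%:R + c') * T n k.
Proof. by []. Qed.

End GKPRecurrence.

Arguments gkpS0 {C a b c a' b' c'} n.
Arguments gkpSS {C a b c a' b' c'} n k.

Section Trimming.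
Variables (C : numClosedFieldType) (a b c a' b' c' : C).
Local Notation T := (gkp a b c a' b' c').

Lemma gkp_gtn n k : (n < k)%N -> T n k = 0.
Proof.
elim: n k => [|n IHn] [|k] // ltnk.
by rewrite gkpSS !IHn ?mulr0 ?addr0 // ltnW.
Qed.

Lemma gkp_col0 : c = 0 -> forall n, T n.+1 0 = 0.
Proof.
move=> c0; elim=> [|n IHn]; last by rewrite gkpS0 IHn mulr0.
by rewrite gkpS0 c0 mulr0 addr0 mul0r.
Qed.

Lemma gkp_diag : c' = 0 -> forall n, T n.+1 n.+1 = 0.
Proof.
move=> c'0; elim=> [|n IHn]; first by rewrite gkpSS c'0 !mulr0 !add0r mul0r.
by rewrite gkpSS IHn gkp_gtn // !mulr0 addr0.
Qed.

Lemma gkp_trim_left : c = 0 -> c' != 0 -> forall n k,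
  c'^-1 * T n.+1 k.+1 = gkp a b (a + b) a' b' (a' + b' + c') n k.
Proof.
move=> c0 c'0; elim=> [|n IHn] [|k].
- by rewrite /= !mulr0 !add0r mulr1 mulVf.
- by rewrite /= !(mulr0, addr0).
- rewrite gkpSS gkp_col0 // mulr0 addr0 gkpS0 -IHn c0 -!natr1; ring.
- rewrite gkpSS [RHS]gkpSS -!IHn c0 -!natr1; ring.
Qed.

Lemma gkp_trim_right : c' = 0 -> c != 0 -> forall n k,
  c^-1 * T n.+1 k = gkp a b (a + c) a' b' a' n k.
Proof.
move=> c'0 c0; elim=> [|n IHn] [|k].
- by rewrite gkpS0 mulr0 add0r mulr1 mulVf.
- by case: k => [|k]; rewrite /= c'0 !(mulr0, addr0, add0r, mul0r).
- rewrite gkpS0 [RHS]gkpS0 -IHn -!natr1; ring.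
- rewrite gkpSS [RHS]gkpSS -!IHn c'0 -!natr1; ring.
Qed.

End Trimming.

Section RowPolynomials.
Variables (C : numClosedFieldType) (T : nat -> nat -> C).

Lemma rowpolyZ s n : rowpoly (fun m k => s * T m k) n = s *: rowpoly T n.
Proof. by rewrite /rowpoly scaler_sumr; apply: eq_bigr => k _; rewrite scalerA. Qed.

Lemma egfZ s n : egf (fun m k => s * T m k) n = s *: egf T n.
Proof. by rewrite /egf rowpolyZ !scalerA mulrC. Qed.

Lemma rowpoly_trim_left n : T n.+1 0 = 0 ->
  'X * rowpoly (fun m k => T m.+1 k.+1) n = rowpoly T n.+1.
Proof.
move=> T0; rewrite [RHS]/rowpoly big_ord_recl T0 scale0r add0r mulr_sumr.
by apply: eq_bigr => k _; rewrite -scalerAr -exprS.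
Qed.

Lemma rowpoly_trim_right n : T n.+1 n.+1 = 0 ->
  rowpoly (fun m k => T m.+1 k) n = rowpoly T n.+1.
Proof. by move=> Tnn; rewrite [RHS]/rowpoly big_ord_recr /= Tnn scale0r addr0. Qed.

Lemma dz_egf n : dz (egf T) n = (n`!%:R)^-1 *: rowpoly T n.+1.
Proof.
rewrite /dz /egf scalerMnl; congr (_ *: _).
have n1_neq0 : (n.+1%:R : C) != 0 by rewrite pnatr_eq0.
by rewrite factS natrM invfM -mulr_natl mulVKf.
Qed.

End RowPolynomials.

Theorem mainTheorem1 (C : numClosedFieldType) (a b c a' b' c' : C) :
  (* (i) left trimming *)
  (c = 0 -> c' != 0 ->
     let Tstar := fun n k : nat => c'^-1 * gkp a b c a' b' c' n.+1 k.+1 in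
     (forall n k : nat, (k <= n)%N ->
        Tstar n k = gkp a b (a + b) a' b' (a' + b' + c') n k)
     /\
     (forall n : nat,
        mulseries 'X (egf Tstar) n = c'^-1 *: dz (egf (gkp a b c a' b' c')) n))
  /\
  (* (ii) right trimming *)
  (c' = 0 -> c != 0 ->
     let Tstar := fun n k : nat => c^-1 * gkp a b c a' b' c' n.+1 k in
     (forall n k : nat, (k <= n)%N ->
        Tstar n k = gkp a b (a + c) a' b' a' n k)
     /\
     (forall n : nat,
        egf Tstar n = c^-1 *: dz (egf (gkp a b c a' b' c')) n)).
Proof.
split=> const0 const_neq0 Tstar; split=> [n k _|n].
- exact: gkp_trim_left.
- rewrite /mulseries (@egfZ _ (fun m k => gkp a b c a' b' c' m.+1 k.+1)) dz_egf.
  by rewrite /egf -!scalerAr rowpoly_trim_left ?gkp_col0 //.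
- exact: gkp_trim_right.
- rewrite (@egfZ _ (fun m k => gkp a b c a' b' c' m.+1 k)) dz_egf.
  by rewrite /egf rowpoly_trim_right ?gkp_diag.
Qed.
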